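(* For every strongly normalisable $\lambda\mu$-term $M$ (i.e. $M\in\mathrm{SN}$) there exist a restricted basis $\Gamma$, a restricted name context $\Delta$ and a restricted term type $\delta$ such that $\Gamma \vdash_{R} M : \delta \mid \Delta$ is derivable in the restricted intersection type system.
   Context: Terms of Parigot's untyped $\lambda\mu$-calculus: $M ::= x \mid \lambda x.M \mid MN \mid \mu\alpha.C$, commands $C ::= [\alpha]M$, with reduction the compatible closure of $(\lambda x.M)N \to M[N/x]$ and $(\mu\alpha.C)N \to \mu\alpha.C[\alpha \Leftarrow N]$ (structural substitution: every subcommand $[\alpha]P$ becomes $[\alpha]P'N$); the renaming rule $[\alpha]\mu\beta.C\to C[\alpha/\beta]$ is ignored here, which does not change the set of strongly normalisable terms. $\mathrm{SN}$ is the set of terms admitting no infinite reduction sequence. Restricted types: with a single type constant $\varphi$, term types $\delta ::= \kappa\to\varphi \mid \delta\wedge\delta$ and continuation types $\kappa ::= \omega \mid \delta\times\kappa \mid \kappa\wedge\kappa$, pre-ordered by the least intersection type theory ($\wedge$ is the meet) with $\kappa\le\omega$, $(\delta_1\times\kappa_1)\wedge(\delta_2\times\kappa_2)\le(\delta_1\wedge\delta_2)\times(\kappa_1\wedge\kappa_2)$, $\times$ covariant in both arguments, and $\kappa_1\to\varphi\le\kappa_2\to\varphi$ whenever $\kappa_2\le\kappa_1$. A restricted basis $\Gamma$ maps finitely many term variables to restricted term types; a restricted name context $\Delta$ maps finitely many names to restricted continuation types ($\Delta(\alpha)=\omega$ if $\alpha$ is not declared). $\Gamma\vdash_R T:\sigma\mid\Delta$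 means derivable, with all judgements restricted and without the rule assigning $\omega$ to arbitrary terms, using the rules: (Ax) $\Gamma,x{:}\delta\vdash x:\delta\mid\Delta$; (Abs) from $\Gamma,x{:}\delta\vdash M:\kappa\to\varphi\mid\Delta$ infer $\Gamma\vdash\lambda x.M:\delta\times\kappa\to\varphi\mid\Delta$; (App) from $\Gamma\vdash M:\delta\times\kappa\to\varphi\mid\Delta$ and $\Gamma\vdash N:\delta\mid\Delta$ infer $\Gamma\vdash MN:\kappa\to\varphi\mid\Delta$; (Cmd) from $\Gamma\vdash M:\delta\mid\Delta$ infer $\Gamma\vdash[\alpha]M:\delta\times\Delta(\alpha)\mid\Delta$; ($\mu$) from $\Gamma\vdash C:(\kappa'\to\varphi)\times\kappa'\mid\alpha{:}\kappa,\Delta$ infer $\Gamma\vdash\mu\alpha.C:\kappa\to\varphi\mid\Delta$; plus intersection introduction ($\wedge$) and subsumption ($\le$). *)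

(* Untyped lambda-mu calculus with de Bruijn indices
   (two separate index spaces: term variables and names), and the
   restricted strict intersection type system |-_R. *)
From Stdlib Require Import Arith.

(* Var n : term variable (de Bruijn index among lambda binders)
   Lam M : \x.M    App M N : M N    Mu C : mu alpha.C (binds name 0 in C)
   Named a M : [a]M  (a is a de Bruijn index among mu binders) *)
Inductive term : Type :=
| Var : nat -> term
| Lam : term -> term
| App : term -> term -> term
| Mu  : cmd -> term
with cmd : Type :=
| Named : nat -> term -> cmd.

Fixpoint lift_t (c : nat) (M : term) : term :=
  match M with
  | Var n => if c <=? n then Var (S n) else Var n
  | Lam M' => Lam (lift_t (S c) M')
  | App M1 M2 => App (lift_t c M1) (lift_t c M2)
  | Mu C => Mu (lift_tc c C)
  end
with lift_tc (c : nat) (C : cmd) : cmd :=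
  match C with
  | Named a M' => Named a (lift_t c M')
  end.

Fixpoint lift_n (c : nat) (M : term) : term :=
  match M with
  | Var n => Var n
  | Lam M' => Lam (lift_n c M')
  | App M1 M2 => App (lift_n c M1) (lift_n c M2)
  | Mu C => Mu (lift_nc (S c) C)
  end
with lift_nc (c : nat) (C : cmd) : cmd :=
  match C with
  | Named a M' => Named (if c <=? a then S a else a) (lift_n c M')
  end.

Fixpoint subst_t (j : nat) (N : term) (M : term) : term :=
  match M with
  | Var n => if n =? j then N else if j <? n then Var (pred n) else Var n
  | Lam M' => Lam (subst_t (S j) (lift_t 0 N) M')
  | App M1 M2 => App (subst_t j N M1) (subst_t j N M2)
  | Mu C => Mu (subst_c j (lift_n 0 N) C)
  end
with subst_c (j : nat) (N : term) (C : cmd) : cmd :=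
  match C with
  | Named a M' => Named a (subst_t j N M')
  end.

(* structural substitution [a <= N]: every subcommand [a]P becomes [a](P' N) *)
Fixpoint ssubst_t (a : nat) (N : term) (M : term) : term :=
  match M with
  | Var n => Var n
  | Lam M' => Lam (ssubst_t a (lift_t 0 N) M')
  | App M1 M2 => App (ssubst_t a N M1) (ssubst_t a N M2)
  | Mu C => Mu (ssubst_c (S a) (lift_n 0 N) C)
  end
with ssubst_c (a : nat) (N : term) (C : cmd) : cmd :=
  match C with
  | Named b P =>
      if b =? a then Named b (App (ssubst_t a N P) N)
      else Named b (ssubst_t a N P)
  end.

(* ---------- Reduction (compatible closure of beta and mu; no renaming) ---------- *)
Inductive step : term -> term -> Prop :=
| step_beta : forall M N, step (App (Lam M) N) (subst_t 0 N M)
| step_mu : forall C N, step (App (Mu C) N) (Mu (ssubst_c 0 (lift_n 0 N) C))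
| step_lam : forall M M', step M M' -> step (Lam M) (Lam M')
| step_appl : forall M M' N, step M M' -> step (App M N) (App M' N)
| step_appr : forall M N N', step N N' -> step (App M N) (App M N')
| step_mub : forall C C', step_c C C' -> step (Mu C) (Mu C')
with step_c : cmd -> cmd -> Prop :=
| step_named : forall a M M', step M M' -> step_c (Named a M) (Named a M').

Definition SN (M : term) : Prop :=
  ~ exists f : nat -> term, f 0 = M /\ forall n, step (f n) (f (S n)).

(* dtype: delta ::= kappa -> phi | delta /\ delta
   ktype: kappa ::= omega | delta x kappa | kappa /\ kappa *)
Inductive dtype : Type :=
| Arr  : ktype -> dtype
| DAnd : dtype -> dtype -> dtype
with ktype : Type :=
| Omega : ktype
| Times : dtype -> ktype -> ktype
| KAnd  : ktype -> ktype -> ktype.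

Inductive dle : dtype -> dtype -> Prop :=
| dle_refl : forall d, dle d d
| dle_trans : forall d1 d2 d3, dle d1 d2 -> dle d2 d3 -> dle d1 d3
| dle_andl : forall d1 d2, dle (DAnd d1 d2) d1
| dle_andr : forall d1 d2, dle (DAnd d1 d2) d2
| dle_glb : forall d d1 d2, dle d d1 -> dle d d2 -> dle d (DAnd d1 d2)
| dle_arr : forall k1 k2, kle k2 k1 -> dle (Arr k1) (Arr k2)
with kle : ktype -> ktype -> Prop :=
| kle_refl : forall k, kle k k
| kle_trans : forall k1 k2 k3, kle k1 k2 -> kle k2 k3 -> kle k1 k3
| kle_andl : forall k1 k2, kle (KAnd k1 k2) k1
| kle_andr : forall k1 k2, kle (KAnd k1 k2) k2
| kle_glb : forall k k1 k2, kle k k1 -> kle k k2 -> kle k (KAnd k1 k2)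
| kle_omega : forall k, kle k Omega
| kle_times_and : forall d1 k1 d2 k2,
    kle (KAnd (Times d1 k1) (Times d2 k2)) (Times (DAnd d1 d2) (KAnd k1 k2))
| kle_times : forall d1 d2 k1 k2, dle d1 d2 -> kle k1 k2 ->
    kle (Times d1 k1) (Times d2 k2).

Definition basis := nat -> option dtype.
Definition ncontext := nat -> option ktype.

Definition finite_basis (G : basis) : Prop :=
  exists b, forall n, b <= n -> G n = None.
Definition finite_ncontext (D : ncontext) : Prop :=
  exists b, forall n, b <= n -> D n = None.

Definition nlookup (D : ncontext) (a : nat) : ktype :=
  match D a with Some k => k | None => Omega end.

Definition bcons (d : dtype) (G : basis) : basis :=
  fun n => match n with 0 => Some d | S m => G m end.
Definition ncons (k : ktype) (D : ncontext) : ncontext :=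
  fun n => match n with 0 => Some k | S m => D m end.

Inductive typR : basis -> ncontext -> term -> dtype -> Prop :=
| tR_ax : forall G D x d, G x = Some d -> typR G D (Var x) d
| tR_abs : forall G D M d k,
    typR (bcons d G) D M (Arr k) -> typR G D (Lam M) (Arr (Times d k))
| tR_app : forall G D M N d k,
    typR G D M (Arr (Times d k)) -> typR G D N d -> typR G D (App M N) (Arr k)
| tR_mu : forall G D C k k',
    typRc G (ncons k D) C (Times (Arr k') k') -> typR G D (Mu C) (Arr k)
| tR_and : forall G D M d1 d2,
    typR G D M d1 -> typR G D M d2 -> typR G D M (DAnd d1 d2)
| tR_le : forall G D M d1 d2, typR G D M d1 -> dle d1 d2 -> typR G D M d2
with typRc : basis -> ncontext -> cmd -> ktype -> Prop :=
| tRc_cmd : forall G D a M d,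
    typR G D M d -> typRc G D (Named a M) (Times d (nlookup D a))
| tRc_and : forall G D C k1 k2,
    typRc G D C k1 -> typRc G D C k2 -> typRc G D C (KAnd k1 k2)
| tRc_le : forall G D C k1 k2, typRc G D C k1 -> kle k1 k2 -> typRc G D C k2.

(* By induction on the reduction tree of a strongly normalising term, nested with an
   induction on the size of its subterms.  Every term is an abstraction, a
   mu-abstraction, a variable applied to arguments, or a beta- or mu-redex applied to
   arguments.  In the first three cases a typing is assembled from typings of the
   immediate parts, taking meets of their bases and name contexts.  In the redex case
   the contractum is a reduct, hence typable, and restricted typing is closed under
   expansion of a head redex whose argument is typable: a typing of M[N/x]
   (resp. of C[alpha <= N]) yields a type d of N, the meet of the types used at its
   occurrences, and a typing of M with x : d (resp. of C with alpha : d x Delta(alpha)).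
   Intersections are handled atom by atom, which needs the inversion of subtyping on
   arrows and products. *)

From Stdlib Require Import Arith List Lia FunctionalExtensionality Classical ClassicalEpsilon.
Import ListNotations.

Scheme typR_ind' := Induction for typR Sort Prop
with typRc_ind' := Induction for typRc Sort Prop.
Combined Scheme typR_typRc_ind from typR_ind', typRc_ind'.
Scheme term_ind' := Induction for term Sort Prop
with cmd_ind' := Induction for cmd Sort Prop.
Combined Scheme term_cmd_ind from term_ind', cmd_ind'.

(** * Inversion of subtyping *)

Fixpoint atoms (d : dtype) : list ktype :=
  match d with
  | Arr k => [k]
  | DAnd d1 d2 => atoms d1 ++ atoms d2
  end.

Lemma dle_atoms d1 d2 :
  dle d1 d2 -> forall k, In k (atoms d2) -> exists k', In k' (atoms d1) /\ kle k k'.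
Proof.
  induction 1 as [d|d1 d2 d3 _ IH12 _ IH23|d1 d2|d1 d2|d d1 d2 _ IH1 _ IH2|k1 k2 Hk];
    simpl; intros k Hin.
  - exists k. split; [exact Hin | apply kle_refl].
  - destruct (IH23 k Hin) as (k' & Hin' & Hk').
    destruct (IH12 k' Hin') as (k'' & Hin'' & Hk'').
    exists k''. split; [exact Hin'' | eapply kle_trans; eassumption].
  - exists k. split; [apply in_or_app; now left | apply kle_refl].
  - exists k. split; [apply in_or_app; now right | apply kle_refl].
  - apply in_app_or in Hin as [Hin|Hin]; auto.
  - destruct Hin as [<-|[]]. exists k1. split; [now left | exact Hk].
Qed.

Lemma dle_atom d k : In k (atoms d) -> dle d (Arr k).
Proof.
  induction d as [k'|d1 IH1 d2 IH2]; simpl; intros Hin.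
  - destruct Hin as [<-|[]]. apply dle_refl.
  - apply in_app_or in Hin as [Hin|Hin].
    + eapply dle_trans; [apply dle_andl | auto].
    + eapply dle_trans; [apply dle_andr | auto].
Qed.

Lemma dle_Arr_exists d : exists k, dle d (Arr k).
Proof.
  induction d as [k|d1 [k Hk] d2 _].
  - exists k. apply dle_refl.
  - exists k. eapply dle_trans; [apply dle_andl | exact Hk].
Qed.

Lemma dle_Arr_inv k1 k2 : dle (Arr k1) (Arr k2) -> kle k2 k1.
Proof.
  intros Hle. destruct (dle_atoms _ _ Hle k2) as (k' & [<-|[]] & Hk); [now left | exact Hk].
Qed.

Lemma dle_DAnd_Arr_inv d1 d2 k :
  dle (DAnd d1 d2) (Arr k) -> dle d1 (Arr k) \/ dle d2 (Arr k).
Proof.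
  intros Hle. destruct (dle_atoms _ _ Hle k) as (k' & Hin & Hk); [now left|].
  apply in_app_or in Hin as [Hin|Hin]; [left|right];
    (eapply dle_trans; [apply dle_atom, Hin | apply dle_arr, Hk]).
Qed.

(* The meet of the product atoms of [k]; [None] exactly when [k] is equivalent to [Omega]. *)
Fixpoint times_part (k : ktype) : option (dtype * ktype) :=
  match k with
  | Omega => None
  | Times d k' => Some (d, k')
  | KAnd k1 k2 =>
      match times_part k1, times_part k2 with
      | Some (d1, k1'), Some (d2, k2') => Some (DAnd d1 d2, KAnd k1' k2')
      | Some p, None => Some p
      | None, o => o
      end
  end.

Lemma kle_times_part k1 k2 :
  kle k1 k2 -> forall d2 k2', times_part k2 = Some (d2, k2') ->
  exists d1 k1', times_part k1 = Some (d1, k1') /\ dle d1 d2 /\ kle k1' k2'.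
Proof.
  induction 1 as [k|k1 k2 k3 _ IH12 _ IH23|k1 k2|k1 k2|k k1 k2 _ IH1 _ IH2|k
                 |d1 k1 d2 k2|d1 d2 k1 k2 Hd Hk];
    intros d k' Hp; simpl in *.
  - exists d, k'. split; [exact Hp | split; [apply dle_refl | apply kle_refl]].
  - destruct (IH23 _ _ Hp) as (d2 & k2' & Hp2 & Hd2 & Hk2).
    destruct (IH12 _ _ Hp2) as (d1 & k1' & Hp1 & Hd1 & Hk1).
    exists d1, k1'. split; [exact Hp1 | split; [eapply dle_trans | eapply kle_trans]; eassumption].
  - rewrite Hp. destruct (times_part k2) as [[d2 k2']|].
    + eexists _, _. split; [reflexivity | split; [apply dle_andl | apply kle_andl]].
    + exists d, k'. split; [reflexivity | split; [apply dle_refl | apply kle_refl]].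
  - rewrite Hp. destruct (times_part k1) as [[d1 k1']|].
    + eexists _, _. split; [reflexivity | split; [apply dle_andr | apply kle_andr]].
    + exists d, k'. split; [reflexivity | split; [apply dle_refl | apply kle_refl]].
  - destruct (times_part k1) as [[d1 k1']|], (times_part k2) as [[d2 k2']|];
      try discriminate; injection Hp as <- <-; auto.
    destruct (IH1 _ _ eq_refl) as (e1 & l1 & Hp1 & Hd1 & Hk1).
    destruct (IH2 _ _ eq_refl) as (e2 & l2 & Hp2 & Hd2 & Hk2).
    rewrite Hp1 in Hp2. injection Hp2 as -> ->.
    exists e2, l2. split; [exact Hp1 | split; [apply dle_glb | apply kle_glb]; assumption].
  - discriminate.
  - injection Hp as <- <-. eexists _, _.
    split; [reflexivity | split; [apply dle_refl | apply kle_refl]].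
  - injection Hp as <- <-. eexists _, _. split; [reflexivity | split; eassumption].
Qed.

Lemma kle_Times_inv d1 k1 d2 k2 : kle (Times d1 k1) (Times d2 k2) -> dle d1 d2 /\ kle k1 k2.
Proof.
  intros Hle. destruct (kle_times_part _ _ Hle d2 k2 eq_refl) as (d & k & Hp & Hd & Hk).
  injection Hp as -> ->. now split.
Qed.

(** * Context ordering and generation *)

Definition Gle (G' G : basis) : Prop :=
  forall x d, G x = Some d -> exists d', G' x = Some d' /\ dle d' d.

Definition Dle (D' D : ncontext) : Prop :=
  forall a, kle (nlookup D' a) (nlookup D a).

Lemma Gle_refl G : Gle G G.
Proof. intros x d Hx. exists d. split; [exact Hx | apply dle_refl]. Qed.

Lemma Dle_refl D : Dle D D.
Proof. intros a. apply kle_refl. Qed.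

Lemma Gle_bcons d G' G : Gle G' G -> Gle (bcons d G') (bcons d G).
Proof.
  intros HG [|x] a Hx; [|exact (HG x a Hx)].
  exists a. split; [exact Hx | apply dle_refl].
Qed.

Lemma Dle_ncons k D' D : Dle D' D -> Dle (ncons k D') (ncons k D).
Proof. intros HD [|a]; [apply kle_refl | apply HD]. Qed.

Lemma typR_typRc_weaken :
  (forall G D T d, typR G D T d ->
     forall G' D', Gle G' G -> Dle D' D -> typR G' D' T d) /\
  (forall G D C k, typRc G D C k ->
     forall G' D', Gle G' G -> Dle D' D -> typRc G' D' C k).
Proof.
  apply typR_typRc_ind; intros; eauto using typR, typRc, Gle_bcons, Dle_ncons.
  - destruct (H _ _ e) as (d' & Hx & Hle). apply tR_le with d'; [now apply tR_ax | exact Hle].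
  - eapply tRc_le; [apply tRc_cmd; eauto | apply kle_times; [apply dle_refl | apply H1]].
Qed.

Lemma typR_weaken G D G' D' T d : Gle G' G -> Dle D' D -> typR G D T d -> typR G' D' T d.
Proof. intros HG HD H. exact (proj1 typR_typRc_weaken _ _ _ _ H _ _ HG HD). Qed.

Lemma typRc_weaken G D G' D' C k : Gle G' G -> Dle D' D -> typRc G D C k -> typRc G' D' C k.
Proof. intros HG HD H. exact (proj2 typR_typRc_weaken _ _ _ _ H _ _ HG HD). Qed.

Lemma typR_of_Arr G D T d : (forall k, dle d (Arr k) -> typR G D T (Arr k)) -> typR G D T d.
Proof.
  induction d as [k|d1 IH1 d2 IH2]; intros H.
  - apply H, dle_refl.
  - apply tR_and; [apply IH1 | apply IH2]; intros k Hk; apply H;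
      (eapply dle_trans; [|exact Hk]); [apply dle_andl | apply dle_andr].
Qed.

Lemma typR_Var_inv G D x d : typR G D (Var x) d -> exists d', G x = Some d' /\ dle d' d.
Proof.
  intros H. remember (Var x) as T eqn:HT. revert HT.
  induction H as [G D y d Hy| | | |G D M d1 d2 _ IH1 _ IH2|G D M d1 d2 _ IH Hle]; intros HT;
    try discriminate.
  - injection HT as ->. exists d. split; [exact Hy | apply dle_refl].
  - destruct (IH1 HT) as (a & Hx & Ha), (IH2 HT) as (b & Hx' & Hb).
    rewrite Hx in Hx'. injection Hx' as <-. exists a. split; [exact Hx | now apply dle_glb].
  - destruct (IH HT) as (a & Hx & Ha). exists a. split; [exact Hx | eapply dle_trans; eassumption].
Qed.

Lemma typR_Lam_inv G D M d k :
  typR G D (Lam M) d -> dle d (Arr k) ->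
  exists d1 k1, typR (bcons d1 G) D M (Arr k1) /\ kle k (Times d1 k1).
Proof.
  intros H. remember (Lam M) as T eqn:HT. revert k HT.
  induction H as [|G D M' d1 k1 HM| | |G D T d1 d2 _ IH1 _ IH2|G D T d1 d2 _ IH Hle];
    intros k0 HT Hk; try discriminate.
  - injection HT as ->. exists d1, k1. split; [exact HM | now apply dle_Arr_inv].
  - destruct (dle_DAnd_Arr_inv _ _ _ Hk); eauto.
  - apply (IH k0 HT). eapply dle_trans; eassumption.
Qed.

Lemma typR_App_inv G D M N d k :
  typR G D (App M N) d -> dle d (Arr k) ->
  exists d1, typR G D M (Arr (Times d1 k)) /\ typR G D N d1.
Proof.
  intros H. remember (App M N) as T eqn:HT. revert k HT.
  induction H as [| |G D M' N' d1 k1 HM _ HN _| |G D T d1 d2 _ IH1 _ IH2|G D T d1 d2 _ IH Hle];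
    intros k0 HT Hk; try discriminate.
  - injection HT as -> ->. exists d1. split; [|exact HN].
    apply tR_le with (Arr (Times d1 k1)); [exact HM|].
    apply dle_arr, kle_times; [apply dle_refl | now apply dle_Arr_inv].
  - destruct (dle_DAnd_Arr_inv _ _ _ Hk); eauto.
  - apply (IH k0 HT). eapply dle_trans; eassumption.
Qed.

Lemma typR_Mu_inv G D C d k :
  typR G D (Mu C) d -> dle d (Arr k) -> exists k', typRc G (ncons k D) C (Times (Arr k') k').
Proof.
  intros H. remember (Mu C) as T eqn:HT. revert k HT.
  induction H as [| | |G D C' k1 k' HC|G D T d1 d2 _ IH1 _ IH2|G D T d1 d2 _ IH Hle];
    intros k0 HT Hk; try discriminate.
  - injection HT as ->. exists k'.
    apply (typRc_weaken G (ncons k1 D)); [apply Gle_refl | | exact HC].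
    intros [|a]; [now apply dle_Arr_inv | apply kle_refl].
  - destruct (dle_DAnd_Arr_inv _ _ _ Hk); eauto.
  - apply (IH k0 HT). eapply dle_trans; eassumption.
Qed.

Lemma typRc_Named_inv G D a M k :
  typRc G D (Named a M) k -> exists d, typR G D M d /\ kle (Times d (nlookup D a)) k.
Proof.
  intros H. remember (Named a M) as C eqn:HC. revert HC.
  induction H as [G D b M' d HM|G D C k1 k2 _ IH1 _ IH2|G D C k1 k2 _ IH Hle]; intros HC.
  - injection HC as -> ->. exists d. split; [exact HM | apply kle_refl].
  - destruct (IH1 HC) as (d1 & H1 & Hk1), (IH2 HC) as (d2 & H2 & Hk2).
    exists (DAnd d1 d2). split; [now apply tR_and|].
    apply kle_glb; (eapply kle_trans; [apply kle_times; [|apply kle_refl] | eassumption]);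
      [apply dle_andl | apply dle_andr].
  - destruct (IH HC) as (d & HM & Hk). exists d. split; [exact HM | eapply kle_trans; eassumption].
Qed.

(** * Shifting *)

Definition shift (c n : nat) : nat := if c <=? n then S n else n.

Lemma shift_S c n : shift (S c) (S n) = S (shift c n).
Proof. unfold shift. simpl. now destruct (c <=? n). Qed.

Lemma lift_t_Var c n : lift_t c (Var n) = Var (shift c n).
Proof. unfold shift. simpl. now destruct (c <=? n). Qed.

Lemma lift_nc_Named c a M : lift_nc c (Named a M) = Named (shift c a) (lift_n c M).
Proof. reflexivity. Qed.

Lemma bcons_shift_S d G' G c :
  (forall n, G' (shift c n) = G n) -> forall n, bcons d G' (shift (S c) n) = bcons d G n.
Proof. intros Hsh [|n]; [reflexivity | rewrite shift_S; apply Hsh]. Qed.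

Lemma ncons_shift_S k D' D c :
  (forall n, D' (shift c n) = D n) -> forall n, ncons k D' (shift (S c) n) = ncons k D n.
Proof. intros Hsh [|n]; [reflexivity | rewrite shift_S; apply Hsh]. Qed.

Lemma typR_typRc_lift_t :
  (forall G D T d, typR G D T d ->
     forall c G', (forall n, G' (shift c n) = G n) -> typR G' D (lift_t c T) d) /\
  (forall G D C k, typRc G D C k ->
     forall c G', (forall n, G' (shift c n) = G n) -> typRc G' D (lift_tc c C) k).
Proof.
  apply typR_typRc_ind;
    [intros G D x d Hx c G' Hsh; rewrite lift_t_Var; apply tR_ax; now rewrite Hsh | ..];
    intros; simpl; eauto using typR, typRc, bcons_shift_S.
Qed.

Lemma typR_typRc_lift_n :
  (forall G D T d, typR G D T d ->
     forall c D', (forall n, D' (shift c n) = D n) -> typR G D' (lift_n c T) d) /\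
  (forall G D C k, typRc G D C k ->
     forall c D', (forall n, D' (shift c n) = D n) -> typRc G D' (lift_nc c C) k).
Proof.
  apply typR_typRc_ind; [..|intros G D a M d _ IH c D' Hsh| |]; cbn [lift_n];
    eauto using typR, typRc, ncons_shift_S.
  rewrite lift_nc_Named.
  replace (nlookup D a) with (nlookup D' (shift c a)) by (unfold nlookup; now rewrite Hsh).
  now apply tRc_cmd, IH.
Qed.

Lemma typR_typRc_lift_t_inv :
  (forall M G G' D c d, (forall n, G' (shift c n) = G n) ->
     typR G' D (lift_t c M) d -> typR G D M d) /\
  (forall C G G' D c k, (forall n, G' (shift c n) = G n) ->
     typRc G' D (lift_tc c C) k -> typRc G D C k).
Proof.
  apply term_cmd_ind.
  - intros x G G' D c d Hsh H. rewrite lift_t_Var in H.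
    destruct (typR_Var_inv _ _ _ _ H) as (a & Hx & Ha).
    apply tR_le with a; [apply tR_ax; now rewrite <- Hsh | exact Ha].
  - intros M IH G G' D c d Hsh H. apply typR_of_Arr. intros k Hk.
    destruct (typR_Lam_inv _ _ _ _ _ H Hk) as (d1 & k1 & HM & Hk1).
    apply tR_le with (Arr (Times d1 k1)); [|now apply dle_arr].
    apply tR_abs. eapply IH; [apply bcons_shift_S, Hsh | exact HM].
  - intros M IHM N IHN G G' D c d Hsh H. apply typR_of_Arr. intros k Hk.
    destruct (typR_App_inv _ _ _ _ _ _ H Hk) as (d1 & HM & HN).
    apply tR_app with d1; [eapply IHM | eapply IHN]; eassumption.
  - intros C IH G G' D c d Hsh H. apply typR_of_Arr. intros k Hk.
    destruct (typR_Mu_inv _ _ _ _ _ H Hk) as [k' HC].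
    apply tR_mu with k'. eapply IH; eassumption.
  - intros a M IH G G' D c k Hsh H.
    destruct (typRc_Named_inv _ _ _ _ _ H) as (d & HM & Hk).
    apply tRc_le with (Times d (nlookup D a)); [apply tRc_cmd; eapply IH | ]; eassumption.
Qed.

Lemma typR_typRc_lift_n_inv :
  (forall M G D D' c d, (forall n, D' (shift c n) = D n) ->
     typR G D' (lift_n c M) d -> typR G D M d) /\
  (forall C G D D' c k, (forall n, D' (shift c n) = D n) ->
     typRc G D' (lift_nc c C) k -> typRc G D C k).
Proof.
  apply term_cmd_ind.
  - intros x G D D' c d _ H.
    destruct (typR_Var_inv _ _ _ _ H) as (a & Hx & Ha).
    apply tR_le with a; [now apply tR_ax | exact Ha].
  - intros M IH G D D' c d Hsh H. apply typR_of_Arr. intros k Hk.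
    destruct (typR_Lam_inv _ _ _ _ _ H Hk) as (d1 & k1 & HM & Hk1).
    apply tR_le with (Arr (Times d1 k1)); [|now apply dle_arr].
    apply tR_abs. eapply IH; eassumption.
  - intros M IHM N IHN G D D' c d Hsh H. apply typR_of_Arr. intros k Hk.
    destruct (typR_App_inv _ _ _ _ _ _ H Hk) as (d1 & HM & HN).
    apply tR_app with d1; [eapply IHM | eapply IHN]; eassumption.
  - intros C IH G D D' c d Hsh H. apply typR_of_Arr. intros k Hk.
    destruct (typR_Mu_inv _ _ _ _ _ H Hk) as [k' HC].
    apply tR_mu with k'. eapply IH; [apply ncons_shift_S, Hsh | exact HC].
  - intros a M IH G D D' c k Hsh H. rewrite lift_nc_Named in H.
    destruct (typRc_Named_inv _ _ _ _ _ H) as (d & HM & Hk).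
    replace (nlookup D' (shift c a)) with (nlookup D a) in Hk by (unfold nlookup; now rewrite Hsh).
    apply tRc_le with (Times d (nlookup D a)); [apply tRc_cmd; eapply IH | ]; eassumption.
Qed.

Lemma typR_lift_t0 G D N d d0 : typR G D N d -> typR (bcons d0 G) D (lift_t 0 N) d.
Proof. intros H. now apply (proj1 typR_typRc_lift_t _ _ _ _ H). Qed.

Lemma typR_lift_t0_inv G D N d d0 : typR (bcons d0 G) D (lift_t 0 N) d -> typR G D N d.
Proof. now apply (proj1 typR_typRc_lift_t_inv N G (bcons d0 G) D 0 d). Qed.

Lemma typR_lift_n0 G D N d k : typR G D N d -> typR G (ncons k D) (lift_n 0 N) d.
Proof. intros H. now apply (proj1 typR_typRc_lift_n _ _ _ _ H). Qed.

Lemma typR_lift_n0_inv G D N d k : typR G (ncons k D) (lift_n 0 N) d -> typR G D N d.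
Proof. now apply (proj1 typR_typRc_lift_n_inv N G D (ncons k D) 0 d). Qed.

(** * Inverting substitution and structural substitution *)

Section AtomwiseInversion.

Variables (Gof : dtype -> basis) (Dof : dtype -> ncontext).
Hypothesis Gof_mono : forall d1 d2, dle d1 d2 -> Gle (Gof d1) (Gof d2).
Hypothesis Dof_mono : forall d1 d2, dle d1 d2 -> Dle (Dof d1) (Dof d2).

(* The argument type for an intersection is the meet of those found for its atoms. *)
Lemma typR_inv_atomwise G D N T M :
  (forall k, typR G D T (Arr k) -> exists d, typR G D N d /\ typR (Gof d) (Dof d) M (Arr k)) ->
  forall e, typR G D T e -> exists d, typR G D N d /\ typR (Gof d) (Dof d) M e.
Proof.
  intros Hatom e. induction e as [k|e1 IH1 e2 IH2]; intros He; [now apply Hatom|].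
  destruct IH1 as (d1 & HN1 & HM1); [eapply tR_le; [exact He | apply dle_andl]|].
  destruct IH2 as (d2 & HN2 & HM2); [eapply tR_le; [exact He | apply dle_andr]|].
  exists (DAnd d1 d2). split; [now apply tR_and|].
  apply tR_and; [revert HM1 | revert HM2];
    apply typR_weaken; auto using Gof_mono, Dof_mono, dle_andl, dle_andr.
Qed.

Lemma typR_inv_App G D N T1 T2 M1 M2 :
  (forall e, typR G D T1 e -> exists d, typR G D N d /\ typR (Gof d) (Dof d) M1 e) ->
  (forall e, typR G D T2 e -> exists d, typR G D N d /\ typR (Gof d) (Dof d) M2 e) ->
  forall e, typR G D (App T1 T2) e -> exists d, typR G D N d /\ typR (Gof d) (Dof d) (App M1 M2) e.
Proof.
  intros H1 H2. apply typR_inv_atomwise. intros k H.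
  destruct (typR_App_inv _ _ _ _ _ _ H (dle_refl _)) as (d & HT1 & HT2).
  destruct (H1 _ HT1) as (e1 & HN1 & HM1), (H2 _ HT2) as (e2 & HN2 & HM2).
  exists (DAnd e1 e2). split; [now apply tR_and|].
  apply tR_app with d; [revert HM1 | revert HM2];
    apply typR_weaken; auto using Gof_mono, Dof_mono, dle_andl, dle_andr.
Qed.

End AtomwiseInversion.

Definition ins (j : nat) (d : dtype) (G : basis) : basis :=
  fun n => if n =? j then Some d else if j <? n then G (pred n) else G n.

Lemma ins_mono j G d1 d2 : dle d1 d2 -> Gle (ins j d1 G) (ins j d2 G).
Proof.
  intros Hle x a Hx. unfold ins in *. destruct (x =? j).
  - injection Hx as <-. exists d1. now split.
  - exists a. split; [exact Hx | apply dle_refl].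
Qed.

Lemma ins_bcons j d d1 G : ins (S j) d (bcons d1 G) = bcons d1 (ins j d G).
Proof.
  apply functional_extensionality. intros [|n]; [reflexivity|]. unfold ins, bcons.
  change (S n =? S j) with (n =? j). change (S j <? S n) with (j <? n).
  destruct (n =? j); [reflexivity|].
  destruct (j <? n) eqn:Hjn; [|reflexivity].
  apply Nat.ltb_lt in Hjn. destruct n; [lia | reflexivity].
Qed.

Lemma ins_0 d G : ins 0 d G = bcons d G.
Proof. apply functional_extensionality. now intros [|n]. Qed.

Lemma typR_typRc_subst_inv :
  (forall M G D j N e, typR G D (subst_t j N M) e -> (exists d, typR G D N d) ->
     exists d, typR G D N d /\ typR (ins j d G) D M e) /\
  (forall C G D j N k, typRc G D (subst_c j N C) k -> (exists d, typR G D N d) ->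
     exists d, typR G D N d /\ typRc (ins j d G) D C k).
Proof.
  apply term_cmd_ind.
  - intros x G D j N e H [d0 HN]. simpl in H.
    destruct (x =? j) eqn:Hxj.
    + exists e. split; [exact H|]. apply tR_ax. unfold ins. now rewrite Hxj.
    + exists d0. split; [exact HN|].
      destruct (j <? x) eqn:Hjx; destruct (typR_Var_inv _ _ _ _ H) as (a & Ha & Hle);
        (apply tR_le with a; [apply tR_ax | exact Hle]); unfold ins; now rewrite Hxj, Hjx.
  - intros M IH G D j N e H HN. revert e H.
    apply (typR_inv_atomwise _ _ (ins_mono j G) (fun _ _ _ => Dle_refl D)). intros k H.
    destruct (typR_Lam_inv _ _ _ _ _ H (dle_refl _)) as (d1 & k1 & HM & Hk).
    destruct (IH _ _ _ _ _ HM) as (d & HNd & HMd).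
    { destruct HN as [d0 HN]. exists d0. now apply typR_lift_t0. }
    exists d. split; [exact (typR_lift_t0_inv _ _ _ _ _ HNd)|].
    rewrite ins_bcons in HMd.
    apply tR_le with (Arr (Times d1 k1)); [now apply tR_abs | now apply dle_arr].
  - intros M1 IH1 M2 IH2 G D j N e H HN. revert e H.
    apply (typR_inv_App _ _ (ins_mono j G) (fun _ _ _ => Dle_refl D)); intros e H;
      [now apply IH1 | now apply IH2].
  - intros C IH G D j N e H HN. revert e H.
    apply (typR_inv_atomwise _ _ (ins_mono j G) (fun _ _ _ => Dle_refl D)). intros k H.
    destruct (typR_Mu_inv _ _ _ _ _ H (dle_refl _)) as [k' HC].
    destruct (IH _ _ _ _ _ HC) as (d & HNd & HCd).
    { destruct HN as [d0 HN]. exists d0. now apply typR_lift_n0. }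
    exists d. split; [exact (typR_lift_n0_inv _ _ _ _ _ HNd) | now apply tR_mu with k'].
  - intros a M IH G D j N k H HN.
    destruct (typRc_Named_inv _ _ _ _ _ H) as (dM & HM & Hk).
    destruct (IH _ _ _ _ _ HM HN) as (d & HNd & HMd).
    exists d. split; [exact HNd|].
    apply tRc_le with (Times dM (nlookup D a)); [now apply tRc_cmd | exact Hk].
Qed.

Definition updD (D : ncontext) (a : nat) (k : ktype) : ncontext :=
  fun b => if b =? a then Some k else D b.

Lemma nlookup_updD_eq D a k : nlookup (updD D a k) a = k.
Proof. unfold nlookup, updD. now rewrite Nat.eqb_refl. Qed.

Lemma nlookup_updD_neq D a b k : (b =? a) = false -> nlookup (updD D a k) b = nlookup D b.
Proof. intros Hba. unfold nlookup, updD. now rewrite Hba. Qed.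

Lemma updD_mono D a k1 k2 : kle k1 k2 -> Dle (updD D a k1) (updD D a k2).
Proof. intros Hle b. unfold nlookup, updD. destruct (b =? a); [exact Hle | apply kle_refl]. Qed.

Lemma updD_ncons D a k k' : updD (ncons k D) (S a) k' = ncons k (updD D a k').
Proof. apply functional_extensionality. now intros [|b]. Qed.

Lemma updD_0 D k k' : updD (ncons k D) 0 k' = ncons k' D.
Proof. apply functional_extensionality. now intros [|b]. Qed.

(* Structural substitution [a <= N] is inverted by giving [a] the continuation type
   [d x Delta(a)], where [d] is a type of [N]. *)
Definition updD_arg (D : ncontext) (a : nat) (d : dtype) : ncontext :=
  updD D a (Times d (nlookup D a)).

Lemma updD_arg_mono D a d1 d2 : dle d1 d2 -> Dle (updD_arg D a d1) (updD_arg D a d2).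
Proof. intros Hle. apply updD_mono, kle_times; [exact Hle | apply kle_refl]. Qed.

(* The type of this occurrence of [N] joins the continuation type of [a]. *)
Lemma typRc_ssubst_Named_self_inv G D a N P k :
  (forall D N e, typR G D (ssubst_t a N P) e -> (exists d, typR G D N d) ->
     exists d, typR G D N d /\ typR G (updD_arg D a d) P e) ->
  typRc G D (Named a (App (ssubst_t a N P) N)) (Times (Arr k) k) -> (exists d, typR G D N d) ->
  exists d k', typR G D N d /\ typRc G (updD_arg D a d) (Named a P) (Times (Arr k') k').
Proof.
  intros IH H HN.
  destruct (typRc_Named_inv _ _ _ _ _ H) as (dPN & HPN & Hk).
  apply kle_Times_inv in Hk as [HdPN HDa].
  destruct (typR_App_inv _ _ _ _ _ _ HPN HdPN) as (d1 & HP & HN1).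
  destruct (IH _ _ _ HP HN) as (d2 & HN2 & HPd).
  exists (DAnd d1 d2), (Times (DAnd d1 d2) k). split; [now apply tR_and|].
  apply tRc_le with (Times (Arr (Times d1 k)) (nlookup (updD_arg D a (DAnd d1 d2)) a)).
  - apply tRc_cmd. revert HPd.
    apply typR_weaken; [apply Gle_refl | apply updD_arg_mono, dle_andr].
  - unfold updD_arg. rewrite nlookup_updD_eq.
    apply kle_times; [apply dle_arr, kle_times; [apply dle_andl | apply kle_refl]|].
    apply kle_times; [apply dle_refl | exact HDa].
Qed.

Lemma typR_typRc_ssubst_inv :
  (forall M G D a N e, typR G D (ssubst_t a N M) e -> (exists d, typR G D N d) ->
     exists d, typR G D N d /\ typR G (updD_arg D a d) M e) /\
  (forall C G D a N k, typRc G D (ssubst_c a N C) (Times (Arr k) k) ->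
     (exists d, typR G D N d) ->
     exists d k', typR G D N d /\ typRc G (updD_arg D a d) C (Times (Arr k') k')).
Proof.
  apply term_cmd_ind.
  - intros x G D a N e H [d0 HN]. exists d0. split; [exact HN|].
    destruct (typR_Var_inv _ _ _ _ H) as (d & Hx & Hle).
    apply tR_le with d; [now apply tR_ax | exact Hle].
  - intros M IH G D a N e H HN. revert e H.
    apply (typR_inv_atomwise _ _ (fun _ _ _ => Gle_refl G) (updD_arg_mono D a)). intros k H.
    destruct (typR_Lam_inv _ _ _ _ _ H (dle_refl _)) as (d1 & k1 & HM & Hk).
    destruct (IH _ _ _ _ _ HM) as (d & HNd & HMd).
    { destruct HN as [d0 HN]. exists d0. now apply typR_lift_t0. }
    exists d. split; [exact (typR_lift_t0_inv _ _ _ _ _ HNd)|].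
    apply tR_le with (Arr (Times d1 k1)); [now apply tR_abs | now apply dle_arr].
  - intros M1 IH1 M2 IH2 G D a N e H HN. revert e H.
    apply (typR_inv_App _ _ (fun _ _ _ => Gle_refl G) (updD_arg_mono D a)); intros e H;
      [now apply IH1 | now apply IH2].
  - intros C IH G D a N e H HN. revert e H.
    apply (typR_inv_atomwise _ _ (fun _ _ _ => Gle_refl G) (updD_arg_mono D a)). intros k H.
    destruct (typR_Mu_inv _ _ _ _ _ H (dle_refl _)) as [k' HC].
    destruct (IH _ _ _ _ _ HC) as (d & k'' & HNd & HCd).
    { destruct HN as [d0 HN]. exists d0. now apply typR_lift_n0. }
    exists d. split; [exact (typR_lift_n0_inv _ _ _ _ _ HNd)|].
    unfold updD_arg in HCd. rewrite updD_ncons in HCd. now apply tR_mu with k''.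
  - intros b P IH G D a N k H HN. simpl in H.
    destruct (b =? a) eqn:Hba.
    + apply Nat.eqb_eq in Hba as ->.
      apply (typRc_ssubst_Named_self_inv G D a N P k); [intros; now apply IH | exact H | exact HN].
    + destruct (typRc_Named_inv _ _ _ _ _ H) as (dP & HP & Hk).
      destruct (IH _ _ _ _ _ HP HN) as (d & HNd & HPd).
      exists d, k. split; [exact HNd|].
      apply tRc_le with (Times dP (nlookup D b)); [|exact Hk].
      unfold updD_arg. rewrite <- (nlookup_updD_neq D a b (Times d (nlookup D a)) Hba).
      now apply tRc_cmd.
Qed.

(** * Subject expansion *)

Lemma typR_beta_expand G D M Q :
  (exists d, typR G D Q d) ->
  forall e, typR G D (subst_t 0 Q M) e -> typR G D (App (Lam M) Q) e.
Proof.
  intros HQ e He. apply typR_of_Arr. intros k Hk.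
  destruct (proj1 typR_typRc_subst_inv M G D 0 Q (Arr k)) as (d & HQd & HM);
    [eapply tR_le; eassumption | exact HQ |].
  rewrite ins_0 in HM. apply tR_app with d; [now apply tR_abs | exact HQd].
Qed.

Lemma typR_mu_expand G D C Q :
  (exists d, typR G D Q d) ->
  forall e, typR G D (Mu (ssubst_c 0 (lift_n 0 Q) C)) e -> typR G D (App (Mu C) Q) e.
Proof.
  intros [d0 HQ] e He. apply typR_of_Arr. intros k Hk.
  destruct (typR_Mu_inv _ _ _ _ _ He Hk) as [k' HC].
  destruct (proj2 typR_typRc_ssubst_inv _ _ _ _ _ _ HC) as (d & k'' & HQd & HCd).
  { exists d0. now apply typR_lift_n0. }
  unfold updD_arg in HCd. rewrite updD_0 in HCd.
  apply tR_app with d; [now apply tR_mu with k'' | exact (typR_lift_n0_inv _ _ _ _ _ HQd)].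
Qed.

Definition apps (X : term) (Ps : list term) : term := fold_left App Ps X.

Lemma apps_snoc X Ps P : apps X (Ps ++ [P]) = App (apps X Ps) P.
Proof. unfold apps. now rewrite fold_left_app. Qed.

Lemma step_apps X X' Ps : step X X' -> step (apps X Ps) (apps X' Ps).
Proof. revert X X'. induction Ps; intros X X' Hstep; simpl; auto using step. Qed.

Lemma typR_apps_expand G D X Y Ps :
  (forall e, typR G D Y e -> typR G D X e) ->
  forall e, typR G D (apps Y Ps) e -> typR G D (apps X Ps) e.
Proof.
  revert X Y. induction Ps as [|P Ps IH]; intros X Y Hexp; [exact Hexp|].
  apply IH. intros e He. apply typR_of_Arr. intros k Hk.
  destruct (typR_App_inv _ _ _ _ _ _ He Hk) as (d & HY & HP).
  apply tR_app with d; [now apply Hexp | exact HP].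
Qed.

Fixpoint times_chain (ds : list dtype) (k : ktype) : ktype :=
  match ds with
  | [] => k
  | d :: ds' => Times d (times_chain ds' k)
  end.

Lemma typR_apps G D X Ps ds k :
  Forall2 (typR G D) Ps ds -> typR G D X (Arr (times_chain ds k)) -> typR G D (apps X Ps) (Arr k).
Proof.
  intros Hds. revert X. induction Hds as [|P d Ps ds HP _ IH]; intros X HX; [exact HX|].
  apply IH. now apply tR_app with d.
Qed.

(** * Typability of strongly normalising terms *)

Definition typable (M : term) : Prop :=
  exists G D d, finite_basis G /\ finite_ncontext D /\ typR G D M d.

Definition meetG (G1 G2 : basis) : basis :=
  fun x => match G1 x, G2 x with
           | Some d1, Some d2 => Some (DAnd d1 d2)
           | Some d1, None => Some d1
           | None, o => o
           end.

Definition meetD (D1 D2 : ncontext) : ncontext :=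
  fun a => match D1 a, D2 a with
           | Some k1, Some k2 => Some (KAnd k1 k2)
           | Some k1, None => Some k1
           | None, o => o
           end.

Lemma meetG_l G1 G2 : Gle (meetG G1 G2) G1.
Proof.
  intros x d Hx. unfold meetG. rewrite Hx.
  destruct (G2 x); eexists; (split; [reflexivity | apply dle_andl || apply dle_refl]).
Qed.

Lemma meetG_r G1 G2 : Gle (meetG G1 G2) G2.
Proof.
  intros x d Hx. unfold meetG. rewrite Hx.
  destruct (G1 x); eexists; (split; [reflexivity | apply dle_andr || apply dle_refl]).
Qed.

Lemma meetD_l D1 D2 : Dle (meetD D1 D2) D1.
Proof.
  intros a. unfold nlookup, meetD.
  destruct (D1 a), (D2 a); apply kle_andl || apply kle_refl || apply kle_omega.
Qed.

Lemma meetD_r D1 D2 : Dle (meetD D1 D2) D2.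
Proof.
  intros a. unfold nlookup, meetD.
  destruct (D1 a), (D2 a); apply kle_andr || apply kle_refl || apply kle_omega.
Qed.

Lemma finite_meetG G1 G2 : finite_basis G1 -> finite_basis G2 -> finite_basis (meetG G1 G2).
Proof.
  intros [b1 H1] [b2 H2]. exists (b1 + b2). intros n Hn. unfold meetG.
  rewrite H1, H2; [reflexivity | lia | lia].
Qed.

Lemma finite_meetD D1 D2 :
  finite_ncontext D1 -> finite_ncontext D2 -> finite_ncontext (meetD D1 D2).
Proof.
  intros [b1 H1] [b2 H2]. exists (b1 + b2). intros n Hn. unfold meetD.
  rewrite H1, H2; [reflexivity | lia | lia].
Qed.

Lemma typR_meet_l G1 G2 D1 D2 M d : typR G1 D1 M d -> typR (meetG G1 G2) (meetD D1 D2) M d.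
Proof. apply typR_weaken; [apply meetG_l | apply meetD_l]. Qed.

Lemma typR_meet_r G1 G2 D1 D2 M d : typR G2 D2 M d -> typR (meetG G1 G2) (meetD D1 D2) M d.
Proof. apply typR_weaken; [apply meetG_r | apply meetD_r]. Qed.

Lemma typable_Lam M : typable M -> typable (Lam M).
Proof.
  intros (G & D & e & [b HG] & HD & H).
  destruct (dle_Arr_exists e) as [k Hk].
  set (d := match G 0 with Some a => a | None => Arr Omega end).
  exists (fun n => G (S n)), D, (Arr (Times d k)). split; [|split; [exact HD|]].
  - exists b. intros n Hn. apply HG. lia.
  - apply tR_abs. apply (typR_weaken G D); [| apply Dle_refl | now apply tR_le with e].
    intros [|x] a Hx; simpl.
    + exists a. subst d. rewrite Hx. split; [reflexivity | apply dle_refl].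
    + exists a. split; [exact Hx | apply dle_refl].
Qed.

Lemma typable_Mu a P : typable P -> typable (Mu (Named a P)).
Proof.
  intros (G & D & e & HG & [b HD] & H).
  destruct (dle_Arr_exists e) as [k Hk].
  set (D' := updD D a (KAnd k (nlookup D a))).
  exists G, (fun n => D' (S n)), (Arr (nlookup D' 0)). split; [exact HG | split].
  - exists (a + b). intros n Hn. unfold D', updD.
    destruct (S n =? a) eqn:Hna; [apply Nat.eqb_eq in Hna; lia | apply HD; lia].
  - apply tR_mu with k. apply (typRc_weaken G D'); [apply Gle_refl | intros [|n]; apply kle_refl |].
    apply tRc_le with (Times e (nlookup D' a)).
    + apply tRc_cmd. apply (typR_weaken G D); [apply Gle_refl | | exact H].
      intros n. unfold D'. destruct (n =? a) eqn:Hna.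
      * apply Nat.eqb_eq in Hna as ->. rewrite nlookup_updD_eq. apply kle_andr.
      * rewrite nlookup_updD_neq by exact Hna. apply kle_refl.
    + apply kle_times; [exact Hk|]. unfold D'. rewrite nlookup_updD_eq. apply kle_andl.
Qed.

Lemma common_context Ps :
  Forall typable Ps ->
  exists G D ds, finite_basis G /\ finite_ncontext D /\ Forall2 (typR G D) Ps ds.
Proof.
  induction 1 as [|P Ps (G1 & D1 & d & HG1 & HD1 & HP) _ (G2 & D2 & ds & HG2 & HD2 & HPs)].
  - exists (fun _ => None), (fun _ => None), [].
    split; [now exists 0 | split; [now exists 0 | constructor]].
  - exists (meetG G1 G2), (meetD D1 D2), (d :: ds).
    split; [now apply finite_meetG | split; [now apply finite_meetD|]].
    constructor; [now apply typR_meet_l|].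
    eapply Forall2_impl; [|exact HPs]. intros; now apply typR_meet_r.
Qed.

Lemma typable_Var_apps x Ps : Forall typable Ps -> typable (apps (Var x) Ps).
Proof.
  intros HPs. destruct (common_context Ps HPs) as (G & D & ds & HG & HD & Hds).
  set (Gx := fun y => if y =? x then Some (Arr (times_chain ds Omega)) else None).
  exists (meetG Gx G), (meetD (fun _ => None) D), (Arr Omega).
  split; [apply finite_meetG; [|exact HG] | split; [apply finite_meetD; [now exists 0 | exact HD]|]].
  - exists (S x). intros n Hn. unfold Gx.
    destruct (n =? x) eqn:Hnx; [apply Nat.eqb_eq in Hnx; lia | reflexivity].
  - apply typR_apps with ds.
    + eapply Forall2_impl; [|exact Hds]. intros; now apply typR_meet_r.
    + apply typR_meet_l, tR_ax. unfold Gx. now rewrite Nat.eqb_refl.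
Qed.

Lemma typable_apps_expand X Y Q Ps :
  (forall G D, (exists d, typR G D Q d) -> forall e, typR G D Y e -> typR G D X e) ->
  typable (apps Y Ps) -> typable Q -> typable (apps X Ps).
Proof.
  intros Hexp (G1 & D1 & e & HG1 & HD1 & HY) (G2 & D2 & d & HG2 & HD2 & HQ).
  exists (meetG G1 G2), (meetD D1 D2), e.
  split; [now apply finite_meetG | split; [now apply finite_meetD|]].
  apply typR_apps_expand with Y; [|now apply typR_meet_l].
  apply Hexp. exists d. now apply typR_meet_r.
Qed.

Definition reduct (N M : term) : Prop := step M N.

Lemma not_Acc_step M : ~ Acc reduct M -> exists N, step M N /\ ~ Acc reduct N.
Proof.
  intros HM. apply NNPP. intros Hnone. apply HM. constructor. intros N HN.
  apply NNPP. intros HN'. apply Hnone. now exists N.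
Qed.

Lemma SN_Acc M : SN M -> Acc reduct M.
Proof.
  intros HSN. apply NNPP. intros HM. apply HSN.
  assert (next : forall s : {N | ~ Acc reduct N},
            {t : {N | ~ Acc reduct N} | step (proj1_sig s) (proj1_sig t)}).
  { intros [N HN].
    destruct (constructive_indefinite_description _ (not_Acc_step N HN)) as [N' [Hs HN']].
    now exists (exist _ N' HN'). }
  exists (fun n => proj1_sig (Nat.iter n (fun s => proj1_sig (next s)) (exist _ M HM))).
  split; [reflexivity | intros n; exact (proj2_sig (next _))].
Qed.

Inductive subterm : term -> term -> Prop :=
| subterm_refl M : subterm M M
| subterm_Lam N M : subterm (Lam N) M -> subterm N M
| subterm_Mu a N M : subterm (Mu (Named a N)) M -> subterm N M
| subterm_appl N1 N2 M : subterm (App N1 N2) M -> subterm N1 M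
| subterm_appr N1 N2 M : subterm (App N1 N2) M -> subterm N2 M.

Lemma subterm_step N M N' :
  subterm N M -> step N N' -> exists M', step M M' /\ subterm N' M'.
Proof.
  intros Hsub. revert N'.
  induction Hsub as [M|N M _ IH|a N M _ IH|N1 N2 M _ IH|N1 N2 M _ IH]; intros N' Hstep.
  - exists N'. split; [exact Hstep | apply subterm_refl].
  - destruct (IH (Lam N')) as (M' & HM & Hsub); [now apply step_lam|].
    exists M'. split; [exact HM | now apply subterm_Lam].
  - destruct (IH (Mu (Named a N'))) as (M' & HM & Hsub); [now apply step_mub, step_named|].
    exists M'. split; [exact HM | eapply subterm_Mu, Hsub].
  - destruct (IH (App N' N2)) as (M' & HM & Hsub); [now apply step_appl|].
    exists M'. split; [exact HM | eapply subterm_appl, Hsub].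
  - destruct (IH (App N1 N')) as (M' & HM & Hsub); [now apply step_appr|].
    exists M'. split; [exact HM | eapply subterm_appr, Hsub].
Qed.

Lemma subterm_apps_head X Ps M : subterm (apps X Ps) M -> subterm X M.
Proof.
  revert X. induction Ps as [|P Ps IH]; intros X Hsub; [exact Hsub|].
  eapply subterm_appl, IH, Hsub.
Qed.

Lemma subterm_apps_arg X Ps P M : In P Ps -> subterm (apps X Ps) M -> subterm P M.
Proof.
  revert X. induction Ps as [|P' Ps IH]; intros X Hin Hsub; [destruct Hin|].
  destruct Hin as [<-|Hin].
  - eapply subterm_appr, subterm_apps_head, Hsub.
  - eapply IH; eassumption.
Qed.

Fixpoint size_t (M : term) : nat :=
  match M with
  | Var _ => 1
  | Lam M' => S (size_t M')
  | App M1 M2 => S (size_t M1 + size_t M2)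
  | Mu (Named _ M') => S (size_t M')
  end.

Lemma size_apps_head X Ps : size_t X <= size_t (apps X Ps).
Proof.
  revert X. induction Ps as [|P Ps IH]; intros X; [reflexivity|].
  etransitivity; [|apply IH]. simpl. lia.
Qed.

Lemma size_apps_arg X Ps P : In P Ps -> size_t P < size_t (apps X Ps).
Proof.
  revert X. induction Ps as [|P' Ps IH]; intros X Hin; [destruct Hin|].
  destruct Hin as [<-|Hin]; [|now apply IH].
  eapply Nat.lt_le_trans; [|apply (size_apps_head (App X P'))]. simpl. lia.
Qed.

Inductive head_view : term -> Prop :=
| HVLam M : head_view (Lam M)
| HVMu a M : head_view (Mu (Named a M))
| HVVar x Ps : head_view (apps (Var x) Ps)
| HVBeta M Q Ps : head_view (apps (App (Lam M) Q) Ps)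
| HVMuApp C Q Ps : head_view (apps (App (Mu C) Q) Ps).

Lemma head_viewP N : head_view N.
Proof.
  induction N as [x|M _|N1 IH1 N2 _|[a M]].
  - exact (HVVar x []).
  - apply HVLam.
  - destruct IH1 as [M|a M|x Ps|M Q Ps|C Q Ps].
    + exact (HVBeta M N2 []).
    + exact (HVMuApp (Named a M) N2 []).
    + rewrite <- apps_snoc. apply HVVar.
    + rewrite <- apps_snoc. apply HVBeta.
    + rewrite <- apps_snoc. apply HVMuApp.
  - apply HVMu.
Qed.

Lemma typable_subterm_of_Acc M : Acc reduct M -> forall N, subterm N M -> typable N.
Proof.
  induction 1 as [M _ IHred].
  intros N. induction N as [N IHsize] using (well_founded_ind (well_founded_ltof _ size_t)).
  unfold ltof in IHsize. intros Hsub.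
  assert (Harg : forall X Ps P, N = apps X Ps -> In P Ps -> typable P).
  { intros X Ps P -> Hin.
    apply IHsize; [now apply size_apps_arg | eapply subterm_apps_arg; eassumption]. }
  assert (Hredex : forall X Q Y Ps, N = apps (App X Q) Ps -> step (App X Q) Y ->
            (forall G D, (exists d, typR G D Q d) ->
               forall e, typR G D Y e -> typR G D (App X Q) e) ->
            typable N).
  { intros X Q Y Ps HN Hstep Hexp. rewrite HN in Hsub |- *.
    apply typable_apps_expand with Y Q; [exact Hexp | |].
    - destruct (subterm_step _ _ (apps Y Ps) Hsub) as (M' & HM' & Hsub'); [now apply step_apps|].
      exact (IHred M' HM' _ Hsub').
    - apply (Harg X (Q :: Ps)); [exact HN | now left]. }
  destruct (head_viewP N) as [N'|a N'|x Ps|N' Q Ps|C Q Ps].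
  - apply typable_Lam, IHsize; [simpl; lia | now apply subterm_Lam].
  - apply typable_Mu, IHsize; [simpl; lia | eapply subterm_Mu, Hsub].
  - apply typable_Var_apps, Forall_forall. intros P. now apply (Harg (Var x) Ps).
  - eapply Hredex; [reflexivity | apply step_beta | intros G D; apply typR_beta_expand].
  - eapply Hredex; [reflexivity | apply step_mu | intros G D; apply typR_mu_expand].
Qed.

Theorem theorem6p21 :
  forall M : term, SN M ->
  exists (G : basis) (D : ncontext) (d : dtype),
    finite_basis G /\ finite_ncontext D /\ typR G D M d.
Proof.
  intros M HM. exact (typable_subterm_of_Acc M (SN_Acc M HM) M (subterm_refl M)).
Qed.
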